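(* Let $(\Delta,\mathcal H)$ be a generic cut with associated simplicial complexes $K_\Delta,K_+,K_-$ on $\widetilde{[m]}=[m]\cup\{o\}$. Then $K_\Delta$ is the strong connected sum $K_+\#^ZK_-$, where $Z=O_{K_+\cup K_-}(o)$.
   Context: Let $\Delta\subset\mathbb R^n$ be an $n$-dimensional simple polytope $\Delta=\{x:\langle x,\lambda_i\rangle+\eta_i\ge0,\ i=1,\dots,m\}$ whose facets $H_i=\Delta\cap\{\langle x,\lambda_i\rangle+\eta_i=0\}$ are all nonempty. A generic cut is a hyperplane $\mathcal H=\{\langle x,\lambda_0\rangle+\xi=0\}$ in general position with the hyperplanes $\{\langle x,\lambda_i\rangle+\eta_i=0\}$ and with $H_o:=\mathcal H\cap\Delta\neq\varnothing$. Set $\Delta_\pm=\Delta\cap\{\pm(\langle x,\lambda_0\rangle+\xi)\ge0\}$, $K_\Delta=\{\sigma\subset[m]:\bigcap_{i\in\sigma}H_i\ne\varnothing\}\cup\{\varnothing\}$, $K_\pm=\{\sigma\subset\widetilde{[m]}:\bigcap_{i\in\sigma}(H_i\cap\Delta_\pm)\ne\varnothing\}\cup\{\varnothing\}$. Simplicial-complex notation: for $Z\subset K$, $\overline Z$ is the smallest subcomplex containing $Z$; $O_K(Z)=\{\sigma\in K:\sigma\supseteq\tau$ for some $\tau\in Z\}$; $O_K(o)=O_K(\{\{o\}\})$; $\operatorname{Del}_Z(K)=K\setminus O_K(Z)$. A complex is pure if all maximal faces have the same dimension. Connected sum: for simplicial complexes $K_1,K_2$ on the same vertex set and $Z\subset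 K_1\cap K_2$ with $\varnothing\notin Z$ and $O_{K_1\cup K_2}(Z)\subset K_1\cap K_2$, $K_1\#^ZK_2:=\operatorname{Del}_Z(K_1\cup K_2)$. It is strong if $K_1,K_2,W:=K_1\cap K_2$ are pure of the same dimension and $Z=W\setminus\overline{K_1\setminus W}=W\setminus\overline{K_2\setminus W}$. *)

From HB Require Import structures.
From mathcomp Require Import all_boot all_order all_algebra.
From mathcomp Require Import boolp reals.
Set Implicit Arguments. Unset Strict Implicit. Unset Printing Implicit Defensive.
Import Order.TTheory GRing.Theory Num.Theory.
Local Open Scope ring_scope.

Section Complexes.
Variable V : finType.
Implicit Types K Z W : {set {set V}}.

Definition is_complex K := forall s t : {set V}, s \in K -> t \subset s -> t \in K.

Definition closure Z : {set {set V}} := [set t : {set V} | [exists s in Z, t \subset s]].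

Definition starO K Z : {set {set V}} := [set s in K | [exists t in Z, t \subset s]].

Definition starO_v K (o : V) : {set {set V}} := starO K [set [set o]].

Definition Del Z K : {set {set V}} := K :\: starO K Z.

Definition maximal_face K (s : {set V}) := s \in K /\ forall t : {set V}, t \in K -> s \subset t -> t = s.

(* all maximal faces have d vertices (i.e. dimension d-1) *)
Definition pure_of_card K (d : nat) := forall s : {set V}, maximal_face K s -> #|s| = d.

Definition connected_sum_defined K1 K2 Z :=
  [/\ is_complex K1, is_complex K2, Z \subset K1 :&: K2, set0 \notin Z
    & starO (K1 :|: K2) Z \subset K1 :&: K2].

Definition connected_sum K1 K2 Z : {set {set V}} := Del Z (K1 :|: K2).

Definition strong_connected_sum K1 K2 Z :=
  let W := K1 :&: K2 in
  [/\ connected_sum_defined K1 K2 Z,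
      exists d, [/\ pure_of_card K1 d, pure_of_card K2 d & pure_of_card W d],
      Z = W :\: closure (K1 :\: W)
    & Z = W :\: closure (K2 :\: W)].
End Complexes.

Section Geometry.
Variables (R : realType) (n : nat).

Definition dotv (x y : 'rV[R]_n) : R := \sum_(k < n) x ord0 k * y ord0 k.

Variables (m : nat) (lam : 'I_m -> 'rV[R]_n) (eta : 'I_m -> R).

Definition in_poly (x : 'rV[R]_n) : Prop := forall i, 0 <= dotv x (lam i) + eta i.

Definition on_facet (i : 'I_m) (x : 'rV[R]_n) : Prop :=
  in_poly x /\ dotv x (lam i) + eta i = 0.

Definition aff_indep k (p : 'I_k -> 'rV[R]_n) : Prop :=
  forall c : 'I_k -> R, \sum_j c j *: p j = 0 -> \sum_j c j = 0 -> forall j, c j = 0.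

Definition has_aff_indep (S : 'rV[R]_n -> Prop) k : Prop :=
  exists p : 'I_k -> 'rV[R]_n, (forall j, S (p j)) /\ aff_indep p.

(* S has affine dimension exactly n-1: n but not n+1 affinely independent points *)
Definition codim1 (S : 'rV[R]_n -> Prop) : Prop :=
  has_aff_indep S n /\ ~ has_aff_indep S n.+1.

Definition bounded_poly : Prop :=
  exists M : R, forall x, in_poly x -> forall k, `|x ord0 k| <= M.

Definition full_dim_poly : Prop :=
  exists (x : 'rV[R]_n) (e : R), 0 < e /\
    forall y : 'rV[R]_n, (forall k, `|y ord0 k - x ord0 k| < e) -> in_poly y.

Definition is_vertex (x : 'rV[R]_n) : Prop :=
  in_poly x /\ forall y z (t : R), in_poly y -> in_poly z -> 0 < t < 1 ->
    x = t *: y + (1 - t) *: z -> y = z.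

(* Delta is an n-dimensional simple polytope whose facets are exactly the
   (pairwise distinct, nonempty) H_i, i in [m]. *)
Definition simple_polytope : Prop :=
  [/\ bounded_poly /\ full_dim_poly,
      forall i, exists x, on_facet i x,
      forall i, codim1 (on_facet i),
      forall i j, i != j -> ~ (forall x, on_facet i x <-> on_facet j x)
    & forall x, is_vertex x -> #|[set i | `[< on_facet i x >]]| = n].

Variables (lam0 : 'rV[R]_n) (xi : R).

Definition cutf (x : 'rV[R]_n) : R := dotv x lam0 + xi.

(* normals indexed by [m]~ = option 'I_m, with o = None *)
Definition ext_normal (j : option 'I_m) : 'rV[R]_n :=
  if j is Some i then lam i else lam0.

(* generic cut: H_o nonempty, and at every point of H_o the normal of the
   cut together with the normals of the facets through that point are
   linearly independent (general position). *)
Definition generic_cut : Prop :=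
  (exists x, in_poly x /\ cutf x = 0) /\
  forall x, in_poly x -> cutf x = 0 ->
    let A := [set j : option 'I_m |
               if j is Some i then `[< on_facet i x >] else true] in
    forall c : option 'I_m -> R,
      \sum_(j in A) c j *: ext_normal j = 0 -> forall j, j \in A -> c j = 0.

(* x \in Delta_+ (b = true) or Delta_- (b = false) *)
Definition in_half (b : bool) (x : 'rV[R]_n) : Prop :=
  in_poly x /\ (if b then 0 <= cutf x else cutf x <= 0).

(* K_Delta, as a complex on [m]~ not using the vertex o *)
Definition K_Delta : {set {set option 'I_m}} :=
  [set s : {set option 'I_m} | (None \notin s) &&
     `[< s = set0 \/ exists x, in_poly x /\ forall i, Some i \in s -> on_facet i x >]].

(* K_+ (b = true), K_- (b = false); H_o = cut hyperplane \cap Delta *)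
Definition K_half (b : bool) : {set {set option 'I_m}} :=
  [set s : {set option 'I_m} | `[< s = set0 \/ exists x, in_half b x /\
      forall j, j \in s -> if j is Some i then on_facet i x else cutf x = 0 >]].
End Geometry.

(* K_+ and K_- are the face complexes of the simple polytopes Delta_+ and
   Delta_-; the faces containing o are those through H_o, which the two
   halves share.  A face of K_Delta avoiding the cut lies in one half, so
   K_Delta = Del_Z(K_+ u K_-).  A face s common to both halves but avoiding o
   meets H_o (intermediate values on a segment); pushing that point off the
   cut and climbing to a vertex of Delta on either side produces a face of
   one half containing s and missing from the other, so Z = W \ closure of
   (K_+- \ W).  Purity: a maximal face is the facet set of a vertex, which
   lies on exactly n facets either because Delta is simple or, on H_o,
   because the cut is generic. *)

From Pilot Require Import Defs.
From HB Require Import structures.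
From mathcomp Require Import all_boot all_order all_algebra.
From mathcomp Require Import boolp reals.
From mathcomp Require Import ring lra zify.
Set Implicit Arguments. Unset Strict Implicit. Unset Printing Implicit Defensive.
Import Order.TTheory GRing.Theory Num.Theory.
Local Open Scope ring_scope.

Section DotProduct.
Variables (R : realType) (n : nat).
Implicit Types x y z : 'rV[R]_n.

Lemma dotvDl x y z : dotv (x + y) z = dotv x z + dotv y z.
Proof. by rewrite /dotv -big_split; apply: eq_bigr => k _; rewrite mxE mulrDl. Qed.

Lemma dotvZl (t : R) x z : dotv (t *: x) z = t * dotv x z.
Proof. by rewrite /dotv mulr_sumr; apply: eq_bigr => k _; rewrite mxE mulrA. Qed.

Lemma dotvNl x z : dotv (- x) z = - dotv x z.
Proof. by rewrite -scaleN1r dotvZl mulN1r. Qed.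

Lemma dotvBl x y z : dotv (x - y) z = dotv x z - dotv y z.
Proof. by rewrite dotvDl dotvNl. Qed.

Lemma dotvC x y : dotv x y = dotv y x.
Proof. by rewrite /dotv; apply: eq_bigr => k _; rewrite mulrC. Qed.

Lemma dotvZr (t : R) x z : dotv z (t *: x) = t * dotv z x.
Proof. by rewrite dotvC dotvZl dotvC. Qed.

Lemma dotv_affine (t : R) (u w v : 'rV[R]_n) (e : R) :
  dotv (t *: u + (1 - t) *: w) v + e = t * (dotv u v + e) + (1 - t) * (dotv w v + e).
Proof. by rewrite dotvDl !dotvZl; ring. Qed.

End DotProduct.

Section FreeFamilies.
Variables (R : realType) (n : nat) (J : finType) (A : {set J}) (v : J -> 'rV[R]_n).

Definition free_on := forall c : J -> R,
  \sum_(j in A) c j *: v j = 0 -> forall j, j \in A -> c j = 0.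

Definition spanning := forall d, (forall j, j \in A -> dotv d (v j) = 0) -> d = 0.

Let M := \matrix_(k < #|A|) v (enum_val k).

Lemma row_free_free_on : free_on -> row_free M.
Proof.
move=> free; rewrite -kermx_eq0; apply/rowV0P => u /sub_kermxP.
rewrite mulmx_sum_row => uM0; apply/rowP => k; rewrite mxE.
have kA : enum_val k \in A := enum_valP k.
pose c j := u ord0 (enum_rank_in kA j).
have sum_c : \sum_(j in A) c j *: v j = 0.
  rewrite -[RHS]uM0 big_enum_val; apply: eq_bigr => l _.
  by rewrite rowK /c enum_valK_in.
by have := free c sum_c _ kA; rewrite /c enum_valK_in.
Qed.

Lemma row_free_tr_spanning : spanning -> row_free M^T.
Proof.
move=> span; rewrite -kermx_eq0; apply/rowV0P => u /sub_kermxP uM0.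
apply: span => j jA; rewrite -(enum_rankK_in jA jA).
have := congr1 (fun N : 'M_(1, _) => N ord0 (enum_rank_in jA j)) uM0.
rewrite !mxE => <-; apply: eq_bigr => l _; rewrite !mxE.
by congr (_ * v _ _ _); apply: val_inj.
Qed.

Lemma card_free_spanning : free_on -> spanning -> #|A| = n.
Proof.
move=> /row_free_free_on /eqP rkM /row_free_tr_spanning /eqP rkMT.
by rewrite -rkM -mxrank_tr rkMT.
Qed.

Lemma free_on_dual j0 : free_on -> j0 \in A ->
  exists d, forall j, j \in A -> dotv d (v j) = (j == j0)%:R.
Proof.
move=> /row_free_free_on /row_freeP [B MB1] j0A.
exists (col (enum_rank_in j0A j0) B)^T => j jA.
have := congr1 (fun N : 'M_#|A| => N (enum_rank_in jA j) (enum_rank_in j0A j0)) MB1.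
have -> : (j == j0) = (enum_rank_in jA j == enum_rank_in j0A j0).
  apply/eqP/eqP => [jj0 | /(congr1 enum_val)]; last by rewrite !enum_rankK_in.
  by apply: enum_val_inj; rewrite !enum_rankK_in.
rewrite !mxE => <-.
rewrite dotvC; apply: eq_bigr => l _; rewrite !mxE (enum_rankK_in jA jA).
by congr (v _ _ _ * _); apply: val_inj.
Qed.

End FreeFamilies.

Section Polyhedron.
Variables (R : realType) (n : nat) (J : finType) (a : J -> 'rV[R]_n) (b : J -> R).
Implicit Types x y z u w c d : 'rV[R]_n.

Definition slack j x := dotv x (a j) + b j.
Definition feasible x := forall j, 0 <= slack j x.
Definition active x : {set J} := [set j | slack j x == 0].
Definition bounded_feasible :=
  exists M : R, forall x, feasible x -> forall k, `|x ord0 k| <= M.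

Lemma slack_shift j x d (t : R) : slack j (x + t *: d) = slack j x + t * dotv d (a j).
Proof. by rewrite /slack dotvDl dotvZl addrAC. Qed.

Lemma ratio_test x d : feasible x -> (exists j, dotv d (a j) < 0) ->
  exists2 j, dotv d (a j) < 0 & feasible (x + (slack j x / - dotv d (a j)) *: d).
Proof.
move=> hx [j0 dj0].
pose ratio j := slack j x / - dotv d (a j).
have [j dj jmin] := @arg_minP _ _ _ j0 (fun j => dotv d (a j) < 0) ratio dj0.
exists j => // i; rewrite slack_shift -/(ratio j).
have ratio_ge0 : 0 <= ratio j by rewrite divr_ge0 ?hx // oppr_ge0 ltW.
have [di | di] := lerP 0 (dotv d (a i)); first by rewrite addr_ge0 ?hx // mulr_ge0.
by have := jmin i di; rewrite {2}/ratio ler_pdivlMr ?oppr_gt0 //; nra.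
Qed.

Lemma feasible_shift_small x d : feasible x ->
  (forall j, j \in active x -> 0 <= dotv d (a j)) ->
  exists2 t, 0 < t & feasible (x + t *: d).
Proof.
move=> hx hd; have [desc | no_desc] := pselect (exists j, dotv d (a j) < 0).
  have [j dj hy] := ratio_test hx desc.
  exists (slack j x / - dotv d (a j)) => //.
  rewrite divr_gt0 ?oppr_gt0 // lt_neqAle hx andbT eq_sym.
  by apply: contraTN dj => sj0; rewrite -leNgt hd ?inE.
exists 1 => // j; rewrite slack_shift mul1r addr_ge0 // leNgt.
by apply/negP => dj; apply: no_desc; exists j.
Qed.

Lemma bounded_blocking x d : bounded_feasible -> feasible x -> d != 0 ->
  exists j, dotv d (a j) < 0.
Proof.
move=> [M hM] hx dn0; apply: contrapT => no_desc.
have ray (t : R) : 0 <= t -> feasible (x + t *: d).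
  move=> t0 j; rewrite slack_shift addr_ge0 ?mulr_ge0 // leNgt.
  by apply/negP => dj; apply: no_desc; exists j.
have [k dk] : exists k, d ord0 k != 0.
  apply/existsP; apply: contraNT dn0 => /existsPn dk0.
  by apply/eqP/rowP => k; rewrite mxE; apply/eqP/negPn.
have xk_le := hM _ hx k; have xk_ge0 := normr_ge0 (x ord0 k).
have dk_gt0 : 0 < `|d ord0 k| by rewrite normr_gt0.
pose t := (M + `|x ord0 k| + 1) / `|d ord0 k|.
have t0 : 0 <= t by rewrite divr_ge0 //; lra.
have td : `|t * d ord0 k| = M + `|x ord0 k| + 1.
  by rewrite normrM ger0_norm // mulfVK ?gt_eqF.
have := hM _ (ray t t0) k; rewrite !mxE.
have := ler_normB (x ord0 k + t * d ord0 k) (x ord0 k).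
by rewrite addrAC subrr add0r td; lra.
Qed.

Lemma exists_blocked_step c x d : bounded_feasible -> feasible x -> d != 0 ->
  (forall j, j \in active x -> dotv d (a j) = 0) -> 0 <= dotv d c ->
  exists y, [/\ feasible y, active x \proper active y & dotv x c <= dotv y c].
Proof.
move=> bnd hx dn0 hd dc.
have [j dj hy] := ratio_test hx (bounded_blocking bnd hx dn0).
set t := slack j x / - dotv d (a j) in hy.
have t0 : 0 <= t by rewrite divr_ge0 ?hx // oppr_ge0 ltW.
exists (x + t *: d); split => //; last by rewrite dotvDl dotvZl lerDl mulr_ge0.
apply/properP; split.
  by apply/subsetP => i ix; rewrite inE slack_shift hd //; move: ix; rewrite inE mulr0 addr0.
exists j; first by rewrite inE slack_shift /t; apply/eqP; field; rewrite lt_eqF.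
by apply: contraTN dj => /hd ->; rewrite ltxx.
Qed.

Lemma exists_spanning_above c x : bounded_feasible -> feasible x ->
  exists y, [/\ feasible y, active x \subset active y,
                dotv x c <= dotv y c & spanning (active y) a].
Proof.
move=> bnd; have [N] := ubnP (#|J| - #|active x|)%N; elim: N x => // N IH x hN hx.
have [[d [dn0 hd]] | no_dir] :=
  pselect (exists d, d != 0 /\ forall j, j \in active x -> dotv d (a j) = 0); last first.
  exists x; split => // d hd; apply/eqP; apply: contrapT => dn0.
  by apply: no_dir; exists d; split => //; apply/negP.
have [e [en0 he ec]] : exists e, [/\ e != 0,
    forall j, j \in active x -> dotv e (a j) = 0 & 0 <= dotv e c].
  have [dc | dc] := lerP 0 (dotv d c); first by exists d.
  exists (- d); rewrite oppr_eq0 dotvNl oppr_ge0 ltW //; split => // j /hd.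
  by rewrite dotvNl => ->; rewrite oppr0.
have [y [hy xy cxy]] := exists_blocked_step bnd hx en0 he ec.
have [|z [hz yz cyz span]] := IH y _ hy.
  by have := proper_card xy; have := max_card (active y); lia.
exists z; split => //; last exact: le_trans cyz.
exact: subset_trans (proper_sub xy) yz.
Qed.

Lemma spanning_active_eq y z : spanning (active y) a ->
  (forall j, j \in active y -> slack j z = 0) -> z = y.
Proof.
move=> span hz; apply/eqP; rewrite -subr_eq0; apply/eqP; apply: span => j jy.
by have := hz j jy; move: jy; rewrite inE dotvBl /slack => /eqP; lra.
Qed.

Lemma spanning_active_extreme y u w (t : R) : spanning (active y) a ->
  feasible u -> feasible w -> 0 < t < 1 -> y = t *: u + (1 - t) *: w -> u = w.
Proof.
move=> span hu hw /andP [t0 t1] yuw.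
suff [-> ->] : u = y /\ w = y by [].
have on_both j : j \in active y -> slack j u = 0 /\ slack j w = 0.
  rewrite inE /slack yuw dotv_affine => /eqP.
  by have := hu j; have := hw j; rewrite /slack; split; nra.
by split; apply: spanning_active_eq => // j /on_both [].
Qed.

End Polyhedron.

Section ComplexOperations.
Variable V : finType.
Implicit Types (K : {set {set V}}) (s : {set V}).

Lemma starO_vP K o s : (s \in starO_v K o) = (s \in K) && (o \in s).
Proof.
rewrite inE; congr (_ && _); apply/existsP/idP => [[t /andP [/set1P -> ]] | os].
  by rewrite sub1set.
by exists [set o]; rewrite set11 sub1set.
Qed.

Lemma starO_starO_v K o : starO K (starO_v K o) = starO_v K o.
Proof.
apply/setP => s; rewrite inE starO_vP; case sK: (s \in K) => //=.
apply/existsP/idP => [[t /andP []] | os]; last by exists s; rewrite starO_vP sK os subxx.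
by rewrite starO_vP => /andP [_ ot] /subsetP; apply.
Qed.

Lemma closureP K s : reflect (exists2 t, t \in K & s \subset t) (s \in Defs.closure K).
Proof.
rewrite inE; apply: (iffP existsP) => [[t /andP [tK st]] | [t tK st]]; exists t => //.
by rewrite tK.
Qed.

End ComplexOperations.

Section HalfPolytopes.
Variables (R : realType) (n m : nat) (lam : 'I_m -> 'rV[R]_n) (eta : 'I_m -> R)
  (lam0 : 'rV[R]_n) (xi : R).
Implicit Types (x y z u w : 'rV[R]_n) (s t : {set option 'I_m}).
Local Notation cut := (cutf lam0 xi).
Local Notation Kh := (K_half lam eta lam0 xi).

Definition side_sign (b : bool) : R := if b then 1 else -1.

(* Delta_+ and Delta_- as polyhedra indexed by [m]~, the vertex o standing
   for the inequality [side_sign b * (<x, lam0> + xi) >= 0]. *)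
Definition half_normal b (j : option 'I_m) : 'rV[R]_n :=
  if j is Some i then lam i else side_sign b *: lam0.
Definition half_offset b (j : option 'I_m) : R :=
  if j is Some i then eta i else side_sign b * xi.

Local Notation feasible_half b := (feasible (half_normal b) (half_offset b)).
Local Notation active_half b := (active (half_normal b) (half_offset b)).

Lemma side_sign_neq0 b : side_sign b != 0.
Proof. by case: b; rewrite ?oppr_eq0 oner_eq0. Qed.

Lemma side_sign_mul_ge0 b (r : R) : (0 <= side_sign b * r) = (if b then 0 <= r else r <= 0).
Proof. by case: b; rewrite /side_sign ?mul1r ?mulN1r ?oppr_ge0. Qed.

Lemma slack_half_cut b x : slack (half_normal b) (half_offset b) None x = side_sign b * cut x.
Proof. by rewrite /slack /= dotvZr /cutf mulrDr. Qed.

Lemma in_halfE b x : in_half lam eta lam0 xi b x <-> feasible_half b x.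
Proof.
split=> [[hx cx] [i|] | hx]; [exact: hx | by rewrite slack_half_cut side_sign_mul_ge0 |].
split; first by move=> i; apply: (hx (Some i)).
by have := hx None; rewrite slack_half_cut side_sign_mul_ge0.
Qed.

Lemma feasible_half_poly b x : feasible_half b x -> in_poly lam eta x.
Proof. by move=> hx i; apply: (hx (Some i)). Qed.

Lemma feasible_half_cut b x : in_poly lam eta x -> cut x = 0 -> feasible_half b x.
Proof. by move=> hx cx; apply/in_halfE; split => //; rewrite cx; case: b. Qed.

Lemma active_half_Some b x i : (Some i \in active_half b x) = (i \in active lam eta x).
Proof. by rewrite !inE. Qed.

Lemma active_half_None b x : (None \in active_half b x) = (cut x == 0).
Proof. by rewrite inE slack_half_cut mulf_eq0 (negbTE (side_sign_neq0 b)). Qed.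

Lemma on_facetE i x : in_poly lam eta x -> on_facet lam eta i x <-> i \in active lam eta x.
Proof. by move=> hx; rewrite inE; split => [[_ /eqP] | /eqP]. Qed.

Lemma K_halfP b s : s \in Kh b <->
  s = set0 \/ exists2 x, feasible_half b x & s \subset active_half b x.
Proof.
rewrite inE asboolE; split => -[-> | [x]]; try by left.
- move=> [hx facets]; right; exists x; first exact/in_halfE.
  have hx0 : in_poly lam eta x by case: hx.
  apply/subsetP => -[i|] /facets; last by rewrite active_half_None => ->.
  by rewrite active_half_Some => /(on_facetE _ hx0).
- move=> hx sx; right; exists x; split => [|[i|] /(subsetP sx)]; first exact/in_halfE.
    by rewrite active_half_Some => /(on_facetE _ (feasible_half_poly hx)).
  by rewrite active_half_None => /eqP.
Qed.

Lemma K_half_complex b : is_complex (Kh b).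
Proof.
move=> s t /K_halfP [-> | [x hx sx]] ts; apply/K_halfP.
  by left; apply/eqP; rewrite -subset0.
by right; exists x; last exact: subset_trans sx.
Qed.

Lemma K_half_cut_face b b' s : None \in s -> s \in Kh b -> s \in Kh b'.
Proof.
move=> sN /K_halfP [s0 | [x hx sx]]; first by rewrite s0 inE in sN.
have /eqP cx : cut x == 0 by rewrite -(active_half_None b) (subsetP sx).
apply/K_halfP; right; exists x; first exact: feasible_half_cut (feasible_half_poly hx) cx.
apply: subset_trans sx _; apply/subsetP => -[i|];
  by rewrite ?active_half_Some ?active_half_None.
Qed.

Lemma cut_face b : (exists x, in_poly lam eta x /\ cut x = 0) -> [set None] \in Kh b.
Proof.
move=> [x [hx cx]]; apply/K_halfP; right; exists x; first exact: feasible_half_cut.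
by rewrite sub1set active_half_None cx.
Qed.

Lemma segment_meets_cut u w : in_poly lam eta u -> in_poly lam eta w ->
  0 <= cut u -> cut w <= 0 ->
  exists z, [/\ in_poly lam eta z, cut z = 0
              & active lam eta u :&: active lam eta w \subset active lam eta z].
Proof.
move=> hu hw cu cw; have [cuw | cuw] := eqVneq (cut u) (cut w).
  by exists u; split; [| lra | exact: subsetIl].
have duw : 0 < cut u - cut w by rewrite subr_gt0 lt_neqAle eq_sym cuw /=; lra.
pose t := - cut w / (cut u - cut w).
have t0 : 0 <= t by rewrite divr_ge0 //; lra.
have t1 : t <= 1 by rewrite ler_pdivrMr // mul1r; lra.
exists (t *: u + (1 - t) *: w); split.
- by move=> i; rewrite dotv_affine; have := hu i; have := hw i; nra.
- have cut_affine : cut (t *: u + (1 - t) *: w) = t * cut u + (1 - t) * cut w.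
    exact: dotv_affine.
  by rewrite cut_affine /t; field; rewrite gt_eqF.
- apply/subsetP => i; rewrite !inE /slack => /andP [/eqP su /eqP sw].
  by rewrite dotv_affine su sw !mulr0 addr0.
Qed.

Lemma K_half_add_cut s : (exists x, in_poly lam eta x /\ cut x = 0) ->
  s \in Kh true -> s \in Kh false -> None |: s \in Kh true.
Proof.
move=> H0 sp sm; have [-> | sn0] := eqVneq s set0; first by rewrite setU0 cut_face.
case/K_halfP: sp => [/eqP | [u /in_halfE [hu cu] su]]; first by rewrite (negbTE sn0).
case/K_halfP: sm => [/eqP | [w /in_halfE [hw cw] sw]]; first by rewrite (negbTE sn0).
have [z [hz cz uwz]] := segment_meets_cut hu hw cu cw.
apply/K_halfP; right; exists z; first exact: feasible_half_cut.
apply/subsetP => -[i /setU1P [//|si] |_]; last by rewrite active_half_None cz.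
rewrite active_half_Some (subsetP uwz) // inE -(active_half_Some true) -(active_half_Some false).
by rewrite (subsetP su) ?(subsetP sw).
Qed.

Lemma K_halves_noncut s : None \notin s ->
  (s \in Kh true) || (s \in Kh false) <->
  s = set0 \/ exists x, in_poly lam eta x /\ forall i, Some i \in s -> on_facet lam eta i x.
Proof.
move=> sN; rewrite !inE.
split=> [/orP [] /asboolP [-> | [x [[hx _] hs]]] | [s0 | [x [hx hs]]]]; try by left.
- by right; exists x; split => // i /hs.
- by right; exists x; split => // i /hs.
- by apply/orP; left; apply/asboolP; left.
have facets j : j \in s -> if j is Some i then on_facet lam eta i x else cut x = 0.
  by case: j => [i /hs // | Ns]; rewrite Ns in sN.
have [cx | cx] := lerP 0 (cut x); apply/orP; [left | right]; apply/asboolP; right.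
  by exists x.
by exists x; split => //; split => //; apply: ltW.
Qed.

Lemma spanning_half_ext b S :
  spanning S (half_normal b) -> spanning S (ext_normal lam lam0).
Proof.
move=> span d hd; apply: span => -[i|] jS /=; first exact: (hd (Some i)).
by rewrite dotvZr (hd None jS) mulr0.
Qed.

Lemma facets_active x : in_poly lam eta x ->
  [set i | `[< on_facet lam eta i x >]] = active lam eta x.
Proof. by move=> hx; apply/setP => i; rewrite [LHS]inE; apply/asboolP/idP => /(on_facetE _ hx). Qed.

Hypotheses (hP : simple_polytope lam eta) (hG : generic_cut lam eta lam0 xi).

Local Notation Kp := (Kh true).
Local Notation Km := (Kh false).
Local Notation Z := (starO_v (Kp :|: Km) None).

Lemma cut_nonempty : exists x, in_poly lam eta x /\ cut x = 0.
Proof. by case: hG. Qed.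

Lemma simple_polytope_bounded : bounded_feasible lam eta.
Proof. by case: hP => [[[M hM] _] _ _ _ _]; exists M. Qed.

Lemma generic_free_active b x : in_poly lam eta x -> cut x = 0 ->
  free_on (active_half b x) (ext_normal lam lam0).
Proof.
move=> hx cx; suff -> : active_half b x =
    [set j | if j is Some i then `[< on_facet lam eta i x >] else true].
  by case: hG => _; apply.
apply/setP => -[i|]; rewrite [RHS]inE ?active_half_None ?cx ?eqxx //.
by rewrite active_half_Some; apply/idP/asboolP => /(on_facetE _ hx).
Qed.

Lemma vertex_beyond_cut b x : in_poly lam eta x -> cut x = 0 ->
  exists y, [/\ in_poly lam eta y, active lam eta x \subset active lam eta y,
               0 < side_sign b * cut y & spanning (active lam eta y) lam].
Proof.
(* Genericity yields d with <d, lam0> = 1 orthogonal to the facets through x;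
   step off the cut along +-d, then climb along +-lam0 to a vertex. *)
move=> hx cx.
have sign_sqr : side_sign b * side_sign b = 1.
  by case: b; rewrite /side_sign ?mulrNN mulr1.
have xN : None \in active_half true x by rewrite active_half_None cx.
have [d hd] := free_on_dual (generic_free_active (b := true) hx cx) xN.
have d_cut : dotv d lam0 = 1 by rewrite (hd None xN).
have d_facets i : i \in active lam eta x -> dotv d (lam i) = 0.
  by move=> ix; rewrite (hd (Some i)) // active_half_Some.
pose e := side_sign b *: d.
have [t t0 hx1] : exists2 t, 0 < t & in_poly lam eta (x + t *: e).
  by apply: feasible_shift_small => // i /d_facets; rewrite dotvZl => ->; rewrite mulr0.
have x_x1 : active lam eta x \subset active lam eta (x + t *: e).
  apply/subsetP => i ix; move: (ix); rewrite !inE slack_shift dotvZl d_facets //.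
  by rewrite !mulr0 addr0.
have [y [hy x1y cy span]] :=
  exists_spanning_above (side_sign b *: lam0) simple_polytope_bounded hx1.
exists y; split => //; first exact: subset_trans x_x1 x1y.
have dx : dotv x lam0 = - xi by move: cx; rewrite /cutf; lra.
have dx1 : dotv (x + t *: e) lam0 = - xi + t * side_sign b.
  by rewrite dotvDl !dotvZl d_cut mulr1 dx.
move: cy; rewrite !dotvZr dx1 mulrDr mulrCA sign_sqr mulr1 /cutf mulrDr mulrN; lra.
Qed.

Lemma K_half_strict_extension b s :
  s \in Kp -> s \in Km -> None \notin s ->
  exists t, [/\ t \in Kh b, t \notin Kh (~~ b) & s \subset t].
Proof.
move=> sp sm sN.
have /K_halfP [/setP /(_ None) | [x hx sx]] := K_half_add_cut cut_nonempty sp sm.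
  by rewrite !inE eqxx.
have /eqP cx : cut x == 0 by rewrite -(active_half_None true) (subsetP sx) ?setU11.
have [y [hy xy cy span]] := vertex_beyond_cut b (feasible_half_poly hx) cx.
exists (Some @: active lam eta y); split.
- apply/K_halfP; right; exists y.
    by apply/in_halfE; split => //; rewrite -side_sign_mul_ge0 ltW.
  by apply/subsetP => _ /imsetP [i iy ->]; rewrite active_half_Some.
- apply/negP => /K_halfP [/eqP | [z /in_halfE [_ cz] yz]].
    rewrite imset_eq0 => /eqP y0.
    have xy_eq : x = y by apply: spanning_active_eq span _ => j; rewrite y0 inE.
    by move: cy; rewrite -xy_eq cx mulr0 ltxx.
  have zy : z = y.
    apply: spanning_active_eq span _ => i iy.
    by have := subsetP yz _ (imset_f Some iy); rewrite active_half_Some inE => /eqP.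
  by move: cz cy; rewrite zy; case: (b); rewrite /side_sign /=; lra.
- apply/subsetP => -[i|] si; last by rewrite si in sN.
  by rewrite imset_f // (subsetP xy) // -(active_half_Some true) (subsetP sx) // setU1r.
Qed.

Lemma pure_K_half b : pure_of_card (Kh b) n.
Proof.
move=> s [sK smax].
have [x hx sx] : exists2 x, feasible_half b x & s \subset active_half b x.
  case/K_halfP: sK => [-> | //]; have [x0 [hx0 cx0]] := cut_nonempty.
  by exists x0; [exact: feasible_half_cut | exact: sub0set].
have bnd : bounded_feasible (half_normal b) (half_offset b).
  have [M hM] := simple_polytope_bounded.
  by exists M => z /feasible_half_poly; exact: hM.
have [y [hy xy _ span]] := exists_spanning_above 0 bnd hx.
have <- : active_half b y = s.
  apply: smax; last exact: subset_trans sx xy.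
  by apply/K_halfP; right; exists y.
have hy0 := feasible_half_poly hy.
have [cy | ncy] := eqVneq (cut y) 0.
  exact: card_free_spanning (generic_free_active (b := b) hy0 cy) (spanning_half_ext span).
have yS : active_half b y = Some @: active lam eta y.
  apply/setP => -[i|]; first by rewrite active_half_Some (mem_imset _ _ Some_inj).
  by rewrite active_half_None (negbTE ncy); apply/esym/imsetP => -[].
have span_y : spanning (active lam eta y) lam.
  by move=> d hd; apply: span => j; rewrite yS => /imsetP [i iy ->]; exact: hd.
have y_vertex : is_vertex lam eta y.
  by split => // u w t; exact: spanning_active_extreme span_y.
have [_ _ _ _ /(_ y y_vertex)] := hP.
by rewrite facets_active // yS card_imset //; exact: Some_inj.
Qed.

Lemma pure_K_half_meet : pure_of_card (Kp :&: Km) n.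
Proof.
have meet_cut t : None \in t -> t \in Kp -> t \in Kp :&: Km.
  by move=> tN tK; rewrite inE tK (K_half_cut_face false tN tK).
move=> s [/setIP [sp sm] smax].
have sN : None \in s.
  rewrite -(smax (None |: s)) ?setU11 ?subsetUr //.
  by apply: meet_cut; [exact: setU11 | exact: K_half_add_cut cut_nonempty sp sm].
apply: (@pure_K_half true); split => // t tK st.
by apply: smax => //; apply: meet_cut => //; exact: (subsetP st).
Qed.


Lemma mem_cut_star s : (s \in Z) = (s \in Kp :&: Km) && (None \in s).
Proof.
rewrite starO_vP in_setU in_setI; case: (boolP (None \in s)) => sN; rewrite ?andbF ?andbT //.
apply/orP/andP => [[] sK | [sK _]]; last by left.
  by rewrite sK (K_half_cut_face false sN sK).
by rewrite sK (K_half_cut_face true sN sK).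
Qed.

Lemma connected_sum_defined_halves : connected_sum_defined Kp Km Z.
Proof.
have Z_sub : Z \subset Kp :&: Km by apply/subsetP => s; rewrite mem_cut_star => /andP [].
split; [exact: K_half_complex | exact: K_half_complex | exact: Z_sub | |].
  by rewrite mem_cut_star in_set0 andbF.
by rewrite starO_starO_v.
Qed.

Lemma cut_star_eq b : Z = (Kp :&: Km) :\: Defs.closure (Kh b :\: (Kp :&: Km)).
Proof.
apply/setP => s; rewrite mem_cut_star in_setD.
have [sN | sN] := boolP (None \in s); rewrite ?andbT ?andbF.
  case sW : (s \in Kp :&: Km); rewrite ?andbF // andbT.
  apply/esym/negP => /closureP [t]; rewrite in_setD => /andP [tW tK] st.
  have tN := subsetP st _ sN.
  by rewrite inE (K_half_cut_face true tN tK) (K_half_cut_face false tN tK) in tW.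
apply/esym/andP => -[/closureP sC /setIP [sp sm]]; apply: sC.
have [t [tK tK' st]] := K_half_strict_extension b sp sm sN.
exists t => //; rewrite in_setD tK andbT inE.
by case: b tK tK' => /= -> /negbTE ->.
Qed.

Lemma K_Delta_connected_sum : K_Delta lam eta = connected_sum Kp Km Z.
Proof.
apply/setP => s; rewrite /connected_sum /Del starO_starO_v in_setD starO_vP inE.
have [sN | sN] := boolP (None \in s); first by rewrite andbT andNb.
by rewrite andbF /= in_setU; apply/asboolP/idP => /(K_halves_noncut sN).
Qed.

End HalfPolytopes.

Theorem theorem3p9 (R : realType) (n m : nat)
    (lam : 'I_m -> 'rV[R]_n) (eta : 'I_m -> R) (lam0 : 'rV[R]_n) (xi : R) :
  simple_polytope lam eta ->
  generic_cut lam eta lam0 xi ->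
  let Kp := K_half lam eta lam0 xi true in
  let Km := K_half lam eta lam0 xi false in
  let Z := starO_v (Kp :|: Km) None in
  strong_connected_sum Kp Km Z /\ K_Delta lam eta = connected_sum Kp Km Z.
Proof.
move=> hP hG Kp Km Z; split; last exact: K_Delta_connected_sum.
split; first exact: connected_sum_defined_halves.
- exists n; split; [exact: pure_K_half hP hG true | exact: pure_K_half hP hG false |].
  exact: pure_K_half_meet.
- exact: cut_star_eq hP hG true.
- exact: cut_star_eq hP hG false.
Qed.
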